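(* Consider the analog decentralized learning protocol described in the context, with arbitrary step sizes $\eta^{(t)}>0$, $\zeta^{(t)}\ge 0$ and arbitrary transmit powers $P^{(t)}>0$. Then for every iteration $t\ge 0$ and every device $i\in\mathcal{V}$, the analog consensus update $$\boldsymbol\theta_i^{(t+1)}=\boldsymbol\theta_i^{(t+1/2)}+\zeta^{(t)}\big(w_{ii}\hat{\boldsymbol\theta}_i^{(t+1)}+\hat{\boldsymbol y}_i^{(t+1)}-\hat{\boldsymbol\theta}_i^{(t+1)}\big)$$ is equivalent to $$\boldsymbol\theta_i^{(t+1)}=\boldsymbol\theta_i^{(t+1/2)}+\zeta^{(t)}\sum_{j\in\mathcal{N}_i\cup\{i\}}w_{ij}\big(\hat{\boldsymbol\theta}_j^{(t+1)}-\hat{\boldsymbol\theta}_i^{(t+1)}\big)+\zeta^{(t)}\sum_{\tau=0}^{t}\frac{m}{d}(\boldsymbol A^{(\tau)})^T\tilde{\boldsymbol n}_i^{(\tau)},$$ where $\tilde{\boldsymbol n}_i^{(\tau)}\in\mathbb{R}^{m}$ is an effective noise vector which (conditionally on the fading coefficients and on the vectors $\boldsymbol u_j^{(\tau)}$) is distributed as $\mathcal{N}(\boldsymbol 0,\tilde N_{0i}^{(\tau)}\boldsymbol I)$ with $$\tilde N_{0i}^{(t)}=\frac{1}{2}\frac{N_0}{NP^{(t)}}\Bigg(\sum_{s\in\mathcal{S}_i^{\rm AR}}\max_{j\in\mathcal{N}_i^{(s)}}\Big\{|\mathcal{S}_j^{\rm Tx}|\,w_{ij}^2\frac{\|\boldsymbol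 u_j^{(t)}\|^2}{|h_{ij}^{\prime(t)}|^2}\Big\}+\sum_{s\in\mathcal{S}_i^{\rm BR}}|\mathcal{S}_{j_s}^{\rm Tx}|\,w_{ij_s}^2\frac{\|\boldsymbol u_{j_s}^{(t)}\|^2}{|h_{ij_s}^{\prime(t)}|^2}\Bigg),$$ with $\boldsymbol u_j^{(t)}=\boldsymbol\theta_j^{(t+1/2)}-\hat{\boldsymbol\theta}_j^{(t)}$ and $j_s$ the (unique) neighbor of $i$ broadcasting to $i$ in slot $s\in\mathcal{S}_i^{\rm BR}$.
   Context: Setting. $K$ devices $\mathcal{V}=\{1,\dots,K\}$ form a connected undirected graph $\mathcal{G}(\mathcal{V},\mathcal{E})$; $\mathcal{N}_i$ is the neighbor set of $i$. $\boldsymbol W=\boldsymbol W^T\in\mathbb{R}^{K\times K}$ is a doubly stochastic mixing matrix with entries $w_{ij}\ge 0$, $w_{ij}=0$ if $j\notin\mathcal{N}_i\cup\{i\}$, and $\|\boldsymbol W-\boldsymbol 1\boldsymbol 1^T/K\|_2<1$. Each device $i$ has a local function $f_i:\mathbb{R}^d\to\mathbb{R}$ and a stochastic (mini-batch) gradient $\hat\nabla f_i$. Compression (random linear coding). Let $m\le d$ and $\boldsymbol H\in\{\pm1\}^{m\times d}$ with $\frac1d\boldsymbol H\boldsymbol H^T=\boldsymbol I$. For each iteration $t$, $\boldsymbol A^{(t)}=\frac{1}{\sqrt m}\boldsymbol H\boldsymbol R^{(t)}$ where $\boldsymbol R^{(t)}$ is diagonal with i.i.d. entries uniform on $\{\pm1\}$,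 shared by all devices. Channels. For $(i,j)\in\mathcal{E}$, $h_{ij}^{\prime(t)}\in\mathbb{C}\setminus\{0\}$ is the channel coefficient between $i$ and $j$ in iteration $t$ (constant within the iteration). Each iteration uses a communication block of $N$ channel uses split into $M=2n$ slots of $m=N/M$ channel uses each; each device has energy budget $NP^{(t)}$ per block. Received noise vectors $\boldsymbol n_j^{(t,s)}\sim\mathcal{CN}(\boldsymbol 0,N_0\boldsymbol I_m)$ are i.i.d. over devices, slots and iterations, independent of everything else. Schedule. Each device $i$ has disjoint sets of odd slots $\mathcal{S}_i^{\rm AT}$ (transmit in AirComp mode), $\mathcal{S}_i^{\rm AR}$ (receive in AirComp mode, as a center node), and even slots $\mathcal{S}_i^{\rm BT}$ (broadcast), $\mathcal{S}_i^{\rm BR}$ (receive a broadcast); $\mathcal{S}_i^{\rm Tx}=\mathcal{S}_i^{\rm AT}\cup\mathcal{S}_i^{\rm BT}$. For $s\in\mathcal{S}_j^{\rm AR}$, $\mathcal{N}_j^{(s)}\subseteq\mathcal{N}_j$ is the set of neighbors of $j$ transmitting to $j$ in AirComp mode in slot $s$; for $s\in\mathcal{S}_j^{\rm BR}$ there is exactly one neighbor $i_s\in\mathcal{N}_j$ broadcasting to $j$ in slot $s$. For each $j$, the sets $\mathcal{N}_j^{(s)}$ ($s\in\mathcal{S}_j^{\rm AR}$) and the singletons $\{i_s\}$ ($s\in\mathcal{S}_j^{\rm BR}$) partition $\mathcal{N}_j$. Protocol. Initialize $\boldsymbol\theta_i^{(0)}$ arbitrary, $\hat{\boldsymbol\theta}_i^{(0)}=\boldsymbol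 0$, $\hat{\boldsymbol y}_i^{(0)}=\boldsymbol 0$. At iteration $t$: (1) $\boldsymbol\theta_i^{(t+1/2)}=\boldsymbol\theta_i^{(t)}-\eta^{(t)}\hat\nabla f_i(\boldsymbol\theta_i^{(t)})$ and $\boldsymbol u_i^{(t)}=\boldsymbol\theta_i^{(t+1/2)}-\hat{\boldsymbol\theta}_i^{(t)}$. (2) Odd slot $s\in\mathcal{S}_j^{\rm AR}$: each $i\in\mathcal{N}_j^{(s)}$ sends $\boldsymbol x_{ij}^{(t,s)}=\frac{\sqrt{\gamma_j^{(t,s)}}}{h_{ij}^{\prime(t)}}w_{ji}\boldsymbol A^{(t)}\boldsymbol u_i^{(t)}$, $j$ receives $\boldsymbol y_j^{(t,s)}=\sqrt{\gamma_j^{(t,s)}}\sum_{i\in\mathcal{N}_j^{(s)}}w_{ji}\boldsymbol A^{(t)}\boldsymbol u_i^{(t)}+\boldsymbol n_j^{(t,s)}$ and forms $\hat{\boldsymbol y}_j^{(t,s)}=\frac md(\boldsymbol A^{(t)})^T\Re\{\boldsymbol y_j^{(t,s)}/\sqrt{\gamma_j^{(t,s)}}\}$. (3) Even slot $s\in\mathcal{S}_i^{\rm BT}$: $i$ sends $\boldsymbol x_i^{(t,s)}=\sqrt{\alpha_i^{(t,s)}}\boldsymbol A^{(t)}\boldsymbol u_i^{(t)}$; each receiving neighbor $j$ gets $\boldsymbol y_{ij}^{(t,s)}=\sqrt{\alpha_i^{(t,s)}}h_{ij}^{\prime(t)}\boldsymbol A^{(t)}\boldsymbol u_i^{(t)}+\boldsymbol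 n_j^{(t,s)}$ and forms $\hat{\boldsymbol y}_{ij}^{(t,s)}=w_{ji}\frac md(\boldsymbol A^{(t)})^T\Re\{\boldsymbol y_{ij}^{(t,s)}/(\sqrt{\alpha_i^{(t,s)}}h_{ij}^{\prime(t)})\}$. (4) $\hat{\boldsymbol y}_j^{(t+1)}=\hat{\boldsymbol y}_j^{(t)}+\sum_{s\in\mathcal{S}_j^{\rm AR}}\hat{\boldsymbol y}_j^{(t,s)}+\sum_{s\in\mathcal{S}_j^{\rm BR}}\hat{\boldsymbol y}_{i_sj}^{(t,s)}$, $\hat{\boldsymbol\theta}_j^{(t+1)}=\hat{\boldsymbol\theta}_j^{(t)}+\frac md(\boldsymbol A^{(t)})^T\boldsymbol A^{(t)}\boldsymbol u_j^{(t)}$, and $\boldsymbol\theta_j^{(t+1)}=\boldsymbol\theta_j^{(t+1/2)}+\zeta^{(t)}(w_{jj}\hat{\boldsymbol\theta}_j^{(t+1)}+\hat{\boldsymbol y}_j^{(t+1)}-\hat{\boldsymbol\theta}_j^{(t+1)})$. Power scaling (equal power per transmit slot, with the constraints $\mathbb{E}_{\boldsymbol A}\|\boldsymbol x\|^2\le NP^{(t)}/|\mathcal{S}_i^{\rm Tx}|$ met with the largest feasible factors): $\gamma_j^{(t,s)}=\min_{i\in\mathcal{N}_j^{(s)}}\frac{NP^{(t)}|h_{ij}^{\prime(t)}|^2}{|\mathcal{S}_i^{\rm Tx}|w_{ji}^2\|\boldsymbol u_i^{(t)}\|^2}$ and $\alpha_i^{(t,s)}=\frac{NP^{(t)}}{|\mathcal{S}_i^{\rm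 Tx}|\|\boldsymbol u_i^{(t)}\|^2}$ (assumed well defined). *)

From HB Require Import structures.
From mathcomp Require Import all_boot all_order all_algebra.
From mathcomp Require Import all_classical all_reals all_analysis.
From mathcomp Require Import complex.
Set Implicit Arguments.
Unset Strict Implicit.
Unset Printing Implicit Defensive.
Import Order.TTheory GRing.Theory Num.Theory.
Local Open Scope ring_scope.

Definition sqnorm (R : realType) (n : nat) (v : 'cV[R]_n) : R :=
  \sum_(k < n) (v k ord0) ^+ 2.

Definition cabs2 (R : realType) (z : R[i]) : R :=
  (complex.Re z) ^+ 2 + (complex.Im z) ^+ 2.

Definition cplxv (R : realType) (n : nat) (v : 'cV[R]_n) : 'cV[R[i]]_n :=
  map_mx (fun x : R => (x%:C)%C) v.
Definition rev (R : realType) (n : nat) (v : 'cV[R[i]]_n) : 'cV[R]_n :=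
  map_mx (@complex.Re R) v.

(* minimum / maximum of f over a finite NONEMPTY set S (0 if S is empty) *)
Definition setmin (R : realType) (T : finType) (S : {set T}) (f : T -> R) : R :=
  match [pick x in S] with
  | Some x0 => \big[Num.min/f x0]_(x in S) f x
  | None => 0 end.
Definition setmax (R : realType) (T : finType) (S : {set T}) (f : T -> R) : R :=
  match [pick x in S] with
  | Some x0 => \big[Num.max/f x0]_(x in S) f x
  | None => 0 end.

Definition opnorm_lt1 (R : realType) (K : nat) (B : 'M[R]_K) : Prop :=
  exists c : R, 0 <= c /\ c < 1 /\
    forall x : 'cV[R]_K, sqnorm (B *m x) <= c ^+ 2 * sqnorm x.

Section Gauss.
Context (R : realType) (dT : measure_display) (T : measurableType dT)
        (Pr : probability T R).
Local Open Scope classical_set_scope.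

Definition is_normal (X : T -> R) (v : R) : Prop :=
  measurable_fun setT X /\
  forall B : set R, measurable B ->
    Pr (X @^-1` B) =
    (if v == 0 then (\1_B (0:R))%:E else normal_prob 0 (Num.sqrt v) B).

(* The family (Z k)_k is i.i.d. N(0, v): every finite linear combination
   sum_k c_k Z_k is N(0, v * sum_k c_k^2)  (jointly Gaussian, covariance v I). *)
Definition gauss_iid (I : eqType) (Z : I -> T -> R) (v : R) : Prop :=
  forall (s : seq I) (c : I -> R), uniq s ->
    is_normal (fun w => \sum_(k <- s) c k * Z k w) (v * \sum_(k <- s) c k ^+ 2).

Definition gauss_vec (m : nat) (X : T -> 'cV[R]_m) (v : R) : Prop :=
  gauss_iid (fun (k : 'I_m) w => X w k ord0) v.

(* Noise n_j^{(t,s)} ~ CN(0, N0 I_m), i.i.d. over devices j, slots s,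
   iterations t: real and imaginary parts of all entries are i.i.d. N(0,N0/2). *)
Definition noise_iid (K M m : nat)
    (nz : T -> nat -> 'I_K -> 'I_M -> 'cV[R[i]]_m) (N0 : R) : Prop :=
  gauss_iid (fun (k : nat * 'I_K * 'I_M * 'I_m * bool) w =>
               let: (t, j, s, l, b) := k in
               if b then complex.Re (nz w t j s l ord0)
               else complex.Im (nz w t j s l ord0)) (N0 / 2).
End Gauss.

(* Slots are 'I_M; slot index s : 'I_M stands for slot number s+1, so the
   "odd slots" are those with ~~ odd s. *)
Record schedule (K M : nat) := Schedule {
  SAT : 'I_K -> {set 'I_M};
  SAR : 'I_K -> {set 'I_M};
  SBT : 'I_K -> {set 'I_M};
  SBR : 'I_K -> {set 'I_M};
  Nsch : 'I_K -> 'I_M -> {set 'I_K};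
  bcast : 'I_K -> 'I_M -> 'I_K
}.

Definition STx (K M : nat) (sc : schedule K M) (i : 'I_K) : {set 'I_M} :=
  SAT sc i :|: SBT sc i.

Definition schedule_ok (K M : nat) (adj : rel 'I_K) (sc : schedule K M) : Prop :=
  (forall i, [disjoint SAT sc i & SAR sc i] /\ [disjoint SBT sc i & SBR sc i]
             /\ [disjoint SAT sc i :|: SAR sc i & SBT sc i :|: SBR sc i]) /\
  (forall i (s : 'I_M), s \in SAT sc i :|: SAR sc i -> ~~ odd s) /\
  (forall i (s : 'I_M), s \in SBT sc i :|: SBR sc i -> odd s) /\
  (forall j s, s \in SAR sc j ->
     (0 < #|Nsch sc j s|)%N /\
     (forall i, i \in Nsch sc j s -> adj j i) /\
     (forall i, i \in Nsch sc j s -> s \in SAT sc i)) /\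
  (forall j s, s \in SBR sc j ->
     adj j (bcast sc j s) /\ s \in SBT sc (bcast sc j s)) /\
  (* the sets N_j^{(s)} (s in S_j^AR) and {i_s} (s in S_j^BR) partition N_j:
     every neighbour i of j lies in exactly one of them *)
  (forall j i, adj j i ->
     (#|[set s in SAR sc j | i \in Nsch sc j s]|
      + #|[set s in SBR sc j | bcast sc j s == i]|)%N = 1%N).

Definition mdr (R : realType) (m d : nat) : R := m%:R / d%:R.

Section Protocol.
Context (R : realType) (K d m M : nat).
Variable (W : 'M[R]_K) (A : nat -> 'M[R]_(m, d)) (N : nat)
         (P eta zeta : nat -> R)
         (grad : nat -> 'I_K -> 'cV[R]_d -> 'cV[R]_d)
         (h : nat -> 'I_K -> 'I_K -> R[i])   (* h t i j : channel i -> j *)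
         (nz : nat -> 'I_K -> 'I_M -> 'cV[R[i]]_m)
         (sc : schedule K M) (theta0 : 'I_K -> 'cV[R]_d).


Definition state := 'I_K -> 'cV[R]_d * 'cV[R]_d * 'cV[R]_d.  (* (theta, theta_hat, y_hat) *)

Definition thalf_of (t : nat) (st : state) (j : 'I_K) : 'cV[R]_d :=
  (st j).1.1 - eta t *: grad t j (st j).1.1.

Definition u_of (t : nat) (st : state) (j : 'I_K) : 'cV[R]_d :=
  thalf_of t st j - (st j).1.2.

Definition gamma_of (t : nat) (st : state) (j : 'I_K) (s : 'I_M) : R :=
  setmin (Nsch sc j s) (fun i => N%:R * P t * cabs2 (h t i j) /
           (#|STx sc i|%:R * W j i ^+ 2 * sqnorm (u_of t st i))).

Definition alpha_of (t : nat) (st : state) (i : 'I_K) : R :=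
  N%:R * P t / (#|STx sc i|%:R * sqnorm (u_of t st i)).

Definition yAR (t : nat) (st : state) (j : 'I_K) (s : 'I_M) : 'cV[R[i]]_m :=
  (Num.sqrt (gamma_of t st j s))%:C%C *:
     cplxv (\sum_(i in Nsch sc j s) W j i *: (A t *m u_of t st i))
  + nz t j s.
Definition yhatAR (t : nat) (st : state) (j : 'I_K) (s : 'I_M) : 'cV[R]_d :=
  mdr R m d *: ((A t)^T *m rev (((Num.sqrt (gamma_of t st j s))%:C%C)^-1 *: yAR t st j s)).

Definition yBR (t : nat) (st : state) (j : 'I_K) (s : 'I_M) : 'cV[R[i]]_m :=
  let i := bcast sc j s in
  ((Num.sqrt (alpha_of t st i))%:C%C * h t i j) *: cplxv (A t *m u_of t st i)
  + nz t j s.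
Definition yhatBR (t : nat) (st : state) (j : 'I_K) (s : 'I_M) : 'cV[R]_d :=
  let i := bcast sc j s in
  W j i *: (mdr R m d *: ((A t)^T *m
     rev ((((Num.sqrt (alpha_of t st i))%:C%C * h t i j)^-1) *: yBR t st j s))).

Definition step (t : nat) (st : state) : state := fun j =>
  let thh' := (st j).1.2 + mdr R m d *: ((A t)^T *m (A t *m u_of t st j)) in
  let yh' := (st j).2 + \sum_(s in SAR sc j) yhatAR t st j s
                      + \sum_(s in SBR sc j) yhatBR t st j s in
  let th' := thalf_of t st j + zeta t *: (W j j *: thh' + yh' - thh') in
  (th', thh', yh').

Fixpoint traj (t : nat) : state :=
  match t with
  | 0 => fun j => (theta0 j, 0, 0)
  | t'.+1 => step t' (traj t')
  end.

Definition theta t j := (traj t j).1.1.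
Definition thetahat t j := (traj t j).1.2.
Definition yhat t j := (traj t j).2.
Definition thalf t j := thalf_of t (traj t) j.
Definition uvec t j := u_of t (traj t) j.

End Protocol.

(* Effective noise variance  \tilde N_{0i}^{(t)}  computed from channel values
   hv (hv i j = h'_{ij}) and vectors uv (uv j = u_j^{(t)}). *)
Definition Ntil (R : realType) (K d M : nat) (W : 'M[R]_K) (N : nat) (N0 : R)
    (P : nat -> R) (sc : schedule K M) (t : nat) (i : 'I_K)
    (hv : 'I_K -> 'I_K -> R[i]) (uv : 'I_K -> 'cV[R]_d) : R :=
  1 / 2 * (N0 / (N%:R * P t)) *
  (\sum_(s in SAR sc i) setmax (Nsch sc i s)
       (fun j => #|STx sc j|%:R * W i j ^+ 2 * sqnorm (uv j) / cabs2 (hv i j))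
   + \sum_(s in SBR sc i)
       (let j := bcast sc i s in
        #|STx sc j|%:R * W i j ^+ 2 * sqnorm (uv j) / cabs2 (hv i j))).

Definition codemx (R : realType) (m d : nat) (H : 'M[R]_(m, d))
    (Rsign : nat -> 'I_d -> R) (t : nat) : 'M[R]_(m, d) :=
  (Num.sqrt (m%:R : R))^-1 *: (H *m diag_mx (\row_k Rsign t k)).

(* After descaling by its power factor and taking real parts, every slot received by
   device i carries its signal plus Re(k_s n_i^(t,s)), where the gain k_s is 1/sqrt(gamma)
   in an AirComp slot and w_{i j_s}/(sqrt(alpha) h'_{j_s i}) in a broadcast slot.  After
   decoding with (m/d) A^T, the signal parts add up to sum_{j in N_i} w_ij (m/d) A^T A u_j
   because the AirComp groups and the broadcasters partition N_i; this is the increment of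
   sum_j w_ij thetahat_j, so by induction yhat_i is that sum plus the accumulated decoded
   noise, and the unit row sums of W (supported on the graph) give the stated update.
   Each entry of the effective noise sum_s Re(k_s n_i^(t,s)) is the same combination of
   its own block of the i.i.d. N(0, N0/2) real and imaginary noise parts, so the vector is
   N(0, (N0/2) sum_s |k_s|^2 I); finally 1/gamma is the maximum of the reciprocal ratios,
   which turns (N0/2) sum_s |k_s|^2 into Ntil. *)

From Pilot Require Import Defs.
From HB Require Import structures.
From mathcomp Require Import all_boot all_order all_algebra.
From mathcomp Require Import all_classical all_reals all_analysis.
From mathcomp Require Import complex.
From mathcomp Require Import ring.
Import Order.TTheory GRing.Theory Num.Theory.
Local Open Scope ring_scope.
Set Implicit Arguments. Unset Strict Implicit. Unset Printing Implicit Defensive.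

Section ComplexModulus.
Variable R : realType.
Implicit Types x y : R[i].

Lemma Re_mul x y :
  complex.Re (x * y) = complex.Re x * complex.Re y - complex.Im x * complex.Im y.
Proof. by case: x => a b; case: y => c e. Qed.

Lemma cabs2E x : cabs2 x = Normc.normc x ^+ 2.
Proof. by case: x => a b; rewrite /cabs2 /= sqr_sqrtr // addr_ge0 // sqr_ge0. Qed.

Lemma cabs2M x y : cabs2 (x * y) = cabs2 x * cabs2 y.
Proof. by rewrite !cabs2E Normc.normcM exprMn. Qed.

Lemma cabs2V x : cabs2 x^-1 = (cabs2 x)^-1.
Proof. by rewrite !cabs2E Normc.normcV exprVn. Qed.

Lemma cabs2_real (a : R) : cabs2 a%:C%C = a ^+ 2.
Proof. by rewrite /cabs2 /= expr0n addr0. Qed.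

Lemma cabs2_gt0 x : x != 0 -> 0 < cabs2 x.
Proof.
move=> x_neq0; rewrite lt_def addr_ge0 ?sqr_ge0 // andbT.
apply: contra x_neq0; rewrite paddr_eq0 ?sqr_ge0 // !sqrf_eq0 => /andP[/eqP a0 /eqP b0].
by apply/eqP; case: x a0 b0 => a b /= -> ->.
Qed.

End ComplexModulus.

Section SquaredNorm.
Variables (R : realType) (k : nat).
Implicit Types v : 'cV[R]_k.

Lemma sqnorm_ge0 v : 0 <= sqnorm v.
Proof. by apply: sumr_ge0 => l _; apply: sqr_ge0. Qed.

Lemma sqnorm_gt0 v : v != 0 -> 0 < sqnorm v.
Proof.
move=> v_neq0; rewrite lt_def sqnorm_ge0 andbT.
apply: contra v_neq0; rewrite psumr_eq0 => [/allP v0|l _]; last exact: sqr_ge0.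
apply/eqP/matrixP => l o; rewrite ord1 mxE.
by apply/eqP; rewrite -sqrf_eq0; exact: v0 (mem_index_enum l).
Qed.

End SquaredNorm.

Section RealPartVector.
Variables (R : realType) (k : nat).
Implicit Types (v : 'cV[R]_k) (x y : 'cV[R[i]]_k).

Lemma rev0 : Defs.rev (0 : 'cV[R[i]]_k) = 0.
Proof. by apply/matrixP => a b; rewrite !mxE. Qed.

Lemma revD x y : Defs.rev (x + y) = Defs.rev x + Defs.rev y.
Proof. by apply/matrixP => a b; rewrite !mxE; case: (x a b); case: (y a b). Qed.

Lemma rev_cplxv v : Defs.rev (cplxv v) = v.
Proof. by apply/matrixP => a b; rewrite !mxE. Qed.

Lemma revZ_real (a : R) x : Defs.rev (a%:C%C *: x) = a *: Defs.rev x.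
Proof. by apply/matrixP => a' b; rewrite !mxE; case: (x a' b) => ? ? /=; rewrite mul0r subr0. Qed.

Lemma rev_descale (g : R[i]) v y : ((0 < k)%N -> g != 0) ->
  Defs.rev (g^-1 *: (g *: cplxv v + y)) = v + Defs.rev (g^-1 *: y).
Proof.
have [k0 _|_ /(_ isT) g_neq0] := posnP k.
  by move: v y; rewrite k0 => v y; apply/matrixP => -[].
by rewrite scalerDr scalerA mulVf // scale1r revD rev_cplxv.
Qed.

End RealPartVector.

Lemma invr_min (R : realFieldType) (a b : R) :
  0 < a -> 0 < b -> (Num.min a b)^-1 = Num.max a^-1 b^-1.
Proof.
move=> a_gt0 b_gt0; have [ab|ba] := leP a b.
  by rewrite max_l // lef_pV2 ?posrE.
by rewrite max_r // lef_pV2 ?posrE // ltW.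
Qed.

Section SetExtrema.
Variables (R : realType) (T : finType).
Implicit Types (S : {set T}) (f g : T -> R).

Lemma setmin_gt0 S f : (0 < #|S|)%N -> {in S, forall x, 0 < f x} -> 0 < setmin S f.
Proof.
case/card_gt0P=> y yS f_gt0; rewrite /setmin; case: pickP => [x0 x0S|/(_ y)]; last by rewrite yS.
apply: (big_ind (fun a => 0 < a)); first exact: f_gt0.
  by move=> a b a_gt0 b_gt0; rewrite lt_min a_gt0.
exact: f_gt0.
Qed.

Lemma setminV S f : {in S, forall x, 0 < f x} ->
  (setmin S f)^-1 = setmax S (fun x => (f x)^-1).
Proof.
move=> f_gt0; rewrite /setmin /setmax; case: pickP => [x0 x0S|_]; last by rewrite invr0.
suff [] : 0 < \big[Num.min/f x0]_(x in S) f x /\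
  \big[Num.max/(f x0)^-1]_(x in S) (f x)^-1 = (\big[Num.min/f x0]_(x in S) f x)^-1 by [].
apply: (big_ind2 (fun a b => 0 < a /\ b = a^-1)); first by split; [exact: f_gt0|].
  by move=> a b c e [a_gt0 ->] [c_gt0 ->]; rewrite lt_min a_gt0 c_gt0 invr_min.
by move=> x xS; split; [exact: f_gt0|].
Qed.

Lemma setmaxZ S f (c : R) : 0 <= c -> setmax S (fun x => c * f x) = c * setmax S f.
Proof.
move=> c_ge0; rewrite /setmax; case: pickP => [x0 _|_]; last by rewrite mulr0.
by apply: (big_ind2 (fun a b => a = c * b)) => // a b a' b' -> ->; rewrite maxr_pMr.
Qed.

Lemma eq_setmax S f g : {in S, f =1 g} -> setmax S f = setmax S g.
Proof.
move=> fg; rewrite /setmax; case: pickP => [x0 x0S|_] //.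
by rewrite fg //; apply: eq_bigr.
Qed.

End SetExtrema.

Section Schedule.
Variables (K M : nat) (adj : rel 'I_K) (sc : schedule K M).
Hypothesis sc_ok : schedule_ok adj sc.

Lemma SAR_SBR_disjoint i : [disjoint SAR sc i & SBR sc i].
Proof.
have [/(_ i) [_ [_ AB]] _] := sc_ok.
by apply: disjointW AB; apply: finset.subsetUr.
Qed.

Lemma aircomp_group_ok i s : s \in SAR sc i ->
  [/\ (0 < #|Nsch sc i s|)%N, {in Nsch sc i s, forall j, adj i j}
    & {in Nsch sc i s, forall j, s \in SAT sc j}].
Proof. by have [_ [_ [_ [/(_ i s) AR _]]]] := sc_ok => /AR [? [? ?]]. Qed.

Lemma broadcaster_ok i s : s \in SBR sc i ->
  adj i (bcast sc i s) /\ s \in SBT sc (bcast sc i s).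
Proof. by have [_ [_ [_ [_ [/(_ i s) BR _]]]]] := sc_ok. Qed.

Lemma sum_neighbours (V : zmodType) i (F : 'I_K -> V) :
  \sum_(s in SAR sc i) \sum_(j in Nsch sc i s) F j + \sum_(s in SBR sc i) F (bcast sc i s)
  = \sum_(j | adj i j) F j.
Proof.
pose nA j := #|[set s in SAR sc i | j \in Nsch sc i s]|.
pose nB j := #|[set s in SBR sc i | bcast sc i s == j]|.
have multiplicity j : (nA j + nB j)%N = adj i j.
  have [_ [_ [_ [_ [_ partition]]]]] := sc_ok.
  have [/partition //|not_adj] := boolP (adj i j).
  apply/eqP; rewrite addn_eq0 !cards_eq0; apply/andP; split; apply/eqP/setP => s; rewrite !inE.
    by apply/andP => -[/aircomp_group_ok [_ Nadj _] /Nadj]; apply/negP.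
  by apply/andP => -[/broadcaster_ok [adj_b _] /eqP bj]; move: adj_b; rewrite bj; apply/negP.
have sumA : \sum_(s in SAR sc i) \sum_(j in Nsch sc i s) F j = \sum_j F j *+ nA j.
  rewrite (exchange_big_dep predT) //=; apply: eq_bigr => j _.
  by rewrite sumr_const; congr (_ *+ _); apply: eq_card => s; rewrite inE.
have sumB : \sum_(s in SBR sc i) F (bcast sc i s) = \sum_j F j *+ nB j.
  rewrite (partition_big (bcast sc i) predT) //=; apply: eq_bigr => j _.
  rewrite (eq_bigr (fun=> F j)) => [|s /andP[_ /eqP->]] //.
  by rewrite sumr_const; congr (_ *+ _); apply: eq_card => s; rewrite inE.
rewrite sumA sumB -big_split [RHS]big_mkcond /=; apply: eq_bigr => j _.
by rewrite -mulrnDr multiplicity; case: (adj i j).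
Qed.

Lemma sum_receive_slots (V : zmodType) i (F : 'I_M -> V) :
  (forall s, s \notin SAR sc i -> s \notin SBR sc i -> F s = 0) ->
  \sum_s F s = \sum_(s in SAR sc i) F s + \sum_(s in SBR sc i) F s.
Proof.
move=> F0; rewrite -bigU ?SAR_SBR_disjoint //= (bigID (mem [predU SAR sc i & SBR sc i])) /=.
by rewrite [X in _ + X]big1 ?addr0 // => s; rewrite !inE negb_or => /andP[]; apply: F0.
Qed.

End Schedule.

Section GaussianBlocks.
Variables (R : realType) (dT : measure_display) (T : measurableType dT)
  (Pr : probability T R).

Lemma gauss_iid_blocks (I J L : eqType) (Z : I -> T -> R) (v : R)
    (r : seq J) (a : J -> R) (idx : L -> J -> I) (blk : I -> L) (pos : I -> J)
    (X : L -> T -> R) :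
  gauss_iid Pr Z v -> uniq r ->
  (forall l x, blk (idx l x) = l) -> (forall l x, pos (idx l x) = x) ->
  (forall l w, X l w = \sum_(x <- r) a x * Z (idx l x) w) ->
  gauss_iid Pr X (v * \sum_(x <- r) a x ^+ 2).
Proof.
move=> Z_iid r_uniq blk_idx pos_idx X_def s c s_uniq.
pose C y := c (blk y) * a (pos y).
have idx_inj : injective (uncurry idx).
  move=> [l x] [l' x'] /= idx_eq; congr (_, _).
    by rewrite -(blk_idx l x) idx_eq blk_idx.
  by rewrite -(pos_idx l x) idx_eq pos_idx.
have idx_uniq : uniq [seq idx l x | l <- s, x <- r].
  by apply: allpairs_uniq => // p p' _ _; apply: idx_inj.
have comb_eq : (fun w => \sum_(l <- s) c l * X l w) =
    (fun w => \sum_(y <- [seq idx l x | l <- s, x <- r]) C y * Z y w).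
  apply/funext => w; rewrite big_allpairs_dep; apply: eq_bigr => l _.
  by rewrite X_def mulr_sumr; apply: eq_bigr => x _; rewrite /C blk_idx pos_idx mulrA.
have var_eq : v * (\sum_(x <- r) a x ^+ 2) * \sum_(l <- s) c l ^+ 2 =
    v * \sum_(y <- [seq idx l x | l <- s, x <- r]) C y ^+ 2.
  rewrite big_allpairs_dep -mulrA mulr_sumr; congr (_ * _); apply: eq_bigr => l _.
  by rewrite mulrC mulr_sumr; apply: eq_bigr => x _; rewrite /C blk_idx pos_idx exprMn.
by rewrite comb_eq var_eq; apply: Z_iid.
Qed.

Lemma gauss_iid_card0 (I : finType) (X : I -> T -> R) (v v' : R) :
  #|I| = 0%N -> gauss_iid Pr X v -> gauss_iid Pr X v'.
Proof.
move=> I0 X_iid [|k s] c s_uniq; last by case: (fintype0 k I0).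
have := X_iid [::] c s_uniq.
by rewrite [X in v * X]big_nil [X in v' * X]big_nil !mulr0.
Qed.

End GaussianBlocks.

Section EffectiveNoise.
Variables (R : realType) (K d m M : nat) (adj : rel 'I_K) (W : 'M[R]_K) (N : nat)
  (P : nat -> R) (sc : schedule K M).
Variables (t : nat) (i : 'I_K) (hv : 'I_K -> 'I_K -> R[i]) (uv : 'I_K -> 'cV[R]_d).

(* [gammav s] and [alphav j] are the power factors gamma_i^(t,s) and alpha_j^(t,s) computed
   from channel values [hv j i = h'_ji] and vectors [uv]; [noise_gain s] is the gain k_s. *)
Definition aircomp_ratio (j : 'I_K) : R :=
  N%:R * P t * cabs2 (hv j i) / (#|STx sc j|%:R * W i j ^+ 2 * sqnorm (uv j)).

Definition gammav (s : 'I_M) : R := setmin (Nsch sc i s) aircomp_ratio.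

Definition alphav (j : 'I_K) : R := N%:R * P t / (#|STx sc j|%:R * sqnorm (uv j)).

Definition noise_gain (s : 'I_M) : R[i] :=
  (if s \in SAR sc i then (Num.sqrt (gammav s))%:C^-1 else 0)%C
  + (if s \in SBR sc i then (W i (bcast sc i s))%:C *
        ((Num.sqrt (alphav (bcast sc i s)))%:C * hv (bcast sc i s) i)^-1 else 0)%C.

Definition eff_noise (nzv : 'I_K -> 'I_M -> 'cV[R[i]]_m) : 'cV[R]_m :=
  \sum_s Defs.rev (noise_gain s *: nzv i s).

Lemma eff_noise_entry nzv l : eff_noise nzv l ord0 =
  \sum_s (complex.Re (noise_gain s) * complex.Re (nzv i s l ord0)
          - complex.Im (noise_gain s) * complex.Im (nzv i s l ord0)).
Proof. by rewrite /eff_noise summxE; apply: eq_bigr => s _; rewrite !mxE Re_mul. Qed.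

Hypothesis sc_ok : schedule_ok adj sc.

Lemma noise_gain_AR s : s \in SAR sc i -> noise_gain s = (Num.sqrt (gammav s))%:C^-1%C.
Proof.
move=> sA; have /disjointFr sB := SAR_SBR_disjoint sc_ok i.
by rewrite /noise_gain sA sB // addr0.
Qed.

Lemma noise_gain_BR s : s \in SBR sc i -> noise_gain s =
  ((W i (bcast sc i s))%:C * ((Num.sqrt (alphav (bcast sc i s)))%:C * hv (bcast sc i s) i)^-1)%C.
Proof.
move=> sB; have /disjointFl sA := SAR_SBR_disjoint sc_ok i.
by rewrite /noise_gain sA sB // add0r.
Qed.

Lemma noise_gain_idle s : s \notin SAR sc i -> s \notin SBR sc i -> noise_gain s = 0.
Proof. by move=> /negbTE sA /negbTE sB; rewrite /noise_gain sA sB addr0. Qed.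

Hypothesis N_eq : N = (M * m)%N.
Hypothesis P_gt0 : 0 < P t.
Hypothesis W_AR : forall s j, s \in SAR sc i -> j \in Nsch sc i s -> W i j != 0.
Hypothesis hv_neq0 : forall j, adj i j -> hv j i != 0.
Hypothesis uv_AR : forall s j, s \in SAR sc i -> j \in Nsch sc i s -> uv j != 0.
Hypothesis uv_BR : forall s, s \in SBR sc i -> uv (bcast sc i s) != 0.

Lemma block_length_gt0 (s : 'I_M) : (0 < m)%N -> (0 < N)%N.
Proof. by move=> m_gt0; rewrite N_eq muln_gt0 m_gt0 andbT (leq_ltn_trans _ (ltn_ord s)). Qed.

Lemma STx_card_gt0 s j : s \in STx sc j -> (0 < #|STx sc j|)%N.
Proof. by move=> sj; apply/card_gt0P; exists s. Qed.

Lemma aircomp_ratio_gt0 s j : (0 < m)%N -> s \in SAR sc i -> j \in Nsch sc i s ->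
  0 < aircomp_ratio j.
Proof.
move=> m_gt0 sA jN; have [_ group_adj group_SAT] := aircomp_group_ok sc_ok sA.
have sj : s \in STx sc j by rewrite inE group_SAT.
apply: divr_gt0.
  by rewrite !mulr_gt0 ?ltr0n ?(block_length_gt0 s) ?cabs2_gt0 ?hv_neq0 ?group_adj.
rewrite mulr_gt0 ?sqnorm_gt0 ?(uv_AR sA) // mulr_gt0 ?ltr0n ?(STx_card_gt0 sj) //.
by rewrite exprn_even_gt0 //= (W_AR sA).
Qed.

Lemma gammav_gt0 s : (0 < m)%N -> s \in SAR sc i -> 0 < gammav s.
Proof.
move=> m_gt0 sA; have [group_gt0 _ _] := aircomp_group_ok sc_ok sA.
by apply: setmin_gt0 => // j; apply: aircomp_ratio_gt0.
Qed.

Lemma alphav_gt0 s : (0 < m)%N -> s \in SBR sc i -> 0 < alphav (bcast sc i s).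
Proof.
move=> m_gt0 sB; have [_ sT] := broadcaster_ok sc_ok sB.
have sj : s \in STx sc (bcast sc i s) by rewrite inE sT orbT.
rewrite divr_gt0 ?mulr_gt0 ?ltr0n ?(STx_card_gt0 sj) ?(block_length_gt0 s) //.
by rewrite sqnorm_gt0 ?uv_BR.
Qed.

Hypothesis hv_sym : forall j, hv j i = hv i j.

Lemma cabs2_noise_gain_AR s : (0 < m)%N -> s \in SAR sc i ->
  cabs2 (noise_gain s) = (N%:R * P t)^-1 * setmax (Nsch sc i s)
    (fun j => #|STx sc j|%:R * W i j ^+ 2 * sqnorm (uv j) / cabs2 (hv i j)).
Proof.
move=> m_gt0 sA.
rewrite noise_gain_AR // cabs2V cabs2_real sqr_sqrtr ?ltW ?gammav_gt0 //.
rewrite /gammav setminV => [|j]; last exact: aircomp_ratio_gt0.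
rewrite -setmaxZ ?invr_ge0 ?ltW ?mulr_gt0 ?ltr0n ?(block_length_gt0 s) //.
by apply: eq_setmax => j _; rewrite /aircomp_ratio invf_div hv_sym !invfM; ring.
Qed.

Lemma cabs2_noise_gain_BR s : s \in SBR sc i ->
  cabs2 (noise_gain s) = (N%:R * P t)^-1 * (let j := bcast sc i s in
    #|STx sc j|%:R * W i j ^+ 2 * sqnorm (uv j) / cabs2 (hv i j)).
Proof.
move=> sB; rewrite noise_gain_BR // !(cabs2M, cabs2V, cabs2_real) hv_sym.
rewrite sqr_sqrtr; last by rewrite /alphav divr_ge0 ?mulr_ge0 ?ler0n ?sqnorm_ge0 ?ltW.
by rewrite /alphav invfM invf_div !invfM; ring.
Qed.

Lemma noise_gain_energy (N0 : R) : (0 < m)%N ->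
  N0 / 2 * \sum_s cabs2 (noise_gain s) = Ntil W N N0 P sc t i hv uv.
Proof.
move=> m_gt0; rewrite (sum_receive_slots sc_ok (i := i)) => [|s sA sB]; last first.
  by rewrite noise_gain_idle // /cabs2 /= expr0n addr0.
rewrite (eq_bigr _ (fun s sA => cabs2_noise_gain_AR m_gt0 sA)).
rewrite (eq_bigr _ (fun s sB => cabs2_noise_gain_BR sB)) -!mulr_sumr /Ntil.
by ring.
Qed.

Lemma eff_noise_gauss (N0 : R) (dT : measure_display) (T : measurableType dT)
    (Pr : probability T R) (nzr : T -> nat -> 'I_K -> 'I_M -> 'cV[R[i]]_m) :
  noise_iid Pr nzr N0 ->
  gauss_vec Pr (fun w => eff_noise (nzr w t)) (Ntil W N N0 P sc t i hv uv).
Proof.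
move=> noise.
pose coef (x : 'I_M * bool) :=
  if x.2 then complex.Re (noise_gain x.1) else - complex.Im (noise_gain x.1).
pose slots := [seq (s, b) | s <- index_enum 'I_M, b <- [:: true; false]].
have slots_uniq : uniq slots.
  by apply: allpairs_uniq => [||[s b] [s' b'] _ _ [-> ->]] //; apply: index_enum_uniq.
have entries l w : eff_noise (nzr w t) l ord0 =
    \sum_(x <- slots) coef x *
      (if x.2 then complex.Re (nzr w t i x.1 l ord0) else complex.Im (nzr w t i x.1 l ord0)).
  rewrite eff_noise_entry big_allpairs_dep; apply: eq_bigr => s _.
  by rewrite !big_cons big_nil /= addr0 mulNr.
have blocks := gauss_iid_blocks (idx := fun l x => (t, i, x.1, l, x.2))
  (blk := fun y => y.1.2) (pos := fun y => (y.1.1.2, y.2))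
  noise slots_uniq (fun _ _ => erefl) (fun _ '(_, _) => erefl) entries.
have variance :
    N0 / 2 * \sum_(x <- slots) coef x ^+ 2 = N0 / 2 * \sum_s cabs2 (noise_gain s).
  rewrite big_allpairs_dep; congr (_ * _); apply: eq_bigr => s _.
  by rewrite !big_cons big_nil /= sqrrN addr0.
have [m0|m_gt0] := posnP m.
  by apply: gauss_iid_card0 blocks; rewrite card_ord.
by rewrite /gauss_vec -noise_gain_energy // -variance.
Qed.

End EffectiveNoise.

Lemma big_closed_neighbourhood (T : finType) (e : rel T) (V : zmodType) (F : T -> V) x :
  irreflexive e -> \sum_(y | e x y || (y == x)) F y = F x + \sum_(y | e x y) F y.
Proof.
move=> e_irr; rewrite (bigD1 x) ?eqxx ?orbT //=; congr (_ + _); apply: eq_bigl => y.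
by case: eqVneq => [->|]; rewrite ?e_irr ?orbF ?andbT.
Qed.

Section Consensus.
Variables (R : realType) (K d m M : nat) (adj : rel 'I_K) (W : 'M[R]_K)
  (A : nat -> 'M[R]_(m, d)) (N : nat) (P eta zeta : nat -> R)
  (grad : nat -> 'I_K -> 'cV[R]_d -> 'cV[R]_d) (h : nat -> 'I_K -> 'I_K -> R[i])
  (nz : nat -> 'I_K -> 'I_M -> 'cV[R[i]]_m) (sc : schedule K M)
  (theta0 : 'I_K -> 'cV[R]_d).

Local Notation traj := (traj W A N P eta zeta grad h nz sc theta0).
Local Notation u := (uvec W A N P eta zeta grad h nz sc theta0).
Local Notation thetahat := (thetahat W A N P eta zeta grad h nz sc theta0).
Local Notation theta := (theta W A N P eta zeta grad h nz sc theta0).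
Local Notation thalf := (thalf W A N P eta zeta grad h nz sc theta0).
Local Notation yhat := (yhat W A N P eta zeta grad h nz sc theta0).

Definition decode t (v : 'cV[R]_m) : 'cV[R]_d := mdr R m d *: ((A t)^T *m v).

Lemma decode0 t : decode t 0 = 0.
Proof. by rewrite /decode mulmx0 scaler0. Qed.

Lemma decodeD t : {morph decode t : x y / x + y}.
Proof. by move=> x y; rewrite /decode mulmxDr scalerDr. Qed.

Lemma decodeZ t a v : decode t (a *: v) = a *: decode t v.
Proof. by rewrite /decode -scalemxAr !scalerA mulrC. Qed.

Lemma decode_sum t (I : Type) (r : seq I) (Q : pred I) (F : I -> 'cV[R]_m) :
  decode t (\sum_(x <- r | Q x) F x) = \sum_(x <- r | Q x) decode t (F x).
Proof. exact: (big_morph _ (decodeD t) (decode0 t)). Qed.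

Hypothesis sc_ok : schedule_ok adj sc.
Hypothesis N_eq : N = (M * m)%N.
Hypothesis P_gt0 : forall t, 0 < P t.
Hypothesis W_AR : forall j s k, s \in SAR sc j -> k \in Nsch sc j s -> W j k != 0.
Hypothesis h_neq0 : forall t j k, adj j k -> h t j k != 0.
Hypothesis h_sym : forall t j k, h t j k = h t k j.
Hypothesis u_AR : forall t j s k, s \in SAR sc j -> k \in Nsch sc j s -> u t k != 0.
Hypothesis u_BR : forall t j s, s \in SBR sc j -> u t (bcast sc j s) != 0.

Lemma gammav_traj_gt0 t i s : (0 < m)%N -> s \in SAR sc i ->
  0 < gammav W N P sc t i (h t) (u t) s.
Proof.
move=> m_gt0 sA; apply: (gammav_gt0 sc_ok N_eq) => // [s' j|j ij|s' j].
- exact: W_AR.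
- by rewrite h_sym h_neq0.
- exact: u_AR.
Qed.

Lemma alphav_traj_gt0 t i s : (0 < m)%N -> s \in SBR sc i ->
  0 < alphav N P sc t (u t) (bcast sc i s).
Proof. by move=> m_gt0 sB; apply: (alphav_gt0 sc_ok N_eq) => // s'; apply: u_BR. Qed.

Lemma yhatAR_split t i s : s \in SAR sc i ->
  yhatAR W A N P eta grad h nz sc t (traj t) i s =
  \sum_(j in Nsch sc i s) W i j *: decode t (A t *m u t j)
  + decode t (Defs.rev (noise_gain W N P sc t i (h t) (u t) s *: nz t i s)).
Proof.
move=> sA; rewrite (noise_gain_AR _ _ _ _ _ _ sc_ok) // /yhatAR /yAR rev_descale => [|m_gt0].
  rewrite -[mdr R m d *: _]/(decode t _) decodeD decode_sum.
  under eq_bigr do rewrite decodeZ.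
  reflexivity.
rewrite (fmorph_eq0 (real_complex R)) gt_eqF // sqrtr_gt0.
exact: gammav_traj_gt0 m_gt0 sA.
Qed.

Lemma yhatBR_split t i s : s \in SBR sc i ->
  yhatBR W A N P eta grad h nz sc t (traj t) i s =
  W i (bcast sc i s) *: decode t (A t *m u t (bcast sc i s))
  + decode t (Defs.rev (noise_gain W N P sc t i (h t) (u t) s *: nz t i s)).
Proof.
move=> sB; rewrite (noise_gain_BR _ _ _ _ _ _ sc_ok) // -scalerA revZ_real decodeZ.
rewrite /yhatBR /yBR rev_descale => [|m_gt0].
  rewrite -[mdr R m d *: _]/(decode t _) decodeD scalerDr.
  reflexivity.
have [adj_b _] := broadcaster_ok sc_ok sB.
apply: mulf_neq0; last by rewrite h_sym h_neq0.
rewrite (fmorph_eq0 (real_complex R)) gt_eqF // sqrtr_gt0.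
exact: alphav_traj_gt0 m_gt0 sB.
Qed.

Lemma received_sum t i :
  \sum_(s in SAR sc i) yhatAR W A N P eta grad h nz sc t (traj t) i s
  + \sum_(s in SBR sc i) yhatBR W A N P eta grad h nz sc t (traj t) i s
  = \sum_(j | adj i j) W i j *: decode t (A t *m u t j)
    + decode t (eff_noise W N P sc t i (h t) (u t) (nz t)).
Proof.
rewrite (eq_bigr _ (@yhatAR_split t i)) (eq_bigr _ (@yhatBR_split t i)).
rewrite !big_split /= addrACA (sum_neighbours sc_ok); congr (_ + _).
rewrite /eff_noise decode_sum (sum_receive_slots sc_ok (i := i)) // => s sA sB.
by rewrite noise_gain_idle // scale0r rev0 decode0.
Qed.

Lemma yhat_sum t i : yhat t i = \sum_(j | adj i j) W i j *: thetahat t j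
  + \sum_(tau < t) decode tau (eff_noise W N P sc tau i (h tau) (u tau) (nz tau)).
Proof.
elim: t => [|t IH].
  by rewrite big_ord0 addr0 big1 // => j _; rewrite scaler0.
have -> : thetahat t.+1 = fun j => thetahat t j + decode t (A t *m u t j) by [].
rewrite -[yhat t.+1 i]/(yhat t i + _ + _) -addrA received_sum IH big_ord_recr /=.
rewrite [X in _ = X + _](eq_bigr _ (fun j _ => scalerDr (W i j) _ _)).
by rewrite big_split /= addrACA.
Qed.

Hypothesis adj_irr : irreflexive adj.
Hypothesis W_row : forall i, \sum_(j < K) W i j = 1.
Hypothesis W_off : forall i j, i != j -> ~~ adj i j -> W i j = 0.

Lemma W_closed_neighbourhood_sum i : \sum_(j | adj i j || (j == i)) W i j = 1.
Proof.
rewrite -(W_row i) [RHS](bigID (fun j => adj i j || (j == i))) /=.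
rewrite [X in _ = _ + X]big1 ?addr0 //.
by move=> j; rewrite negb_or eq_sym => /andP[not_adj ij]; apply: W_off.
Qed.

Lemma theta_update t i : theta t.+1 i =
  thalf t i
  + zeta t *: \sum_(j | adj i j || (j == i)) W i j *: (thetahat t.+1 j - thetahat t.+1 i)
  + zeta t *: \sum_(tau < t.+1) decode tau (eff_noise W N P sc tau i (h tau) (u tau) (nz tau)).
Proof.
have -> : theta t.+1 i = thalf t i
    + zeta t *: (W i i *: thetahat t.+1 i + yhat t.+1 i - thetahat t.+1 i) by [].
rewrite -[RHS]addrA -[in RHS]scalerDr yhat_sum; congr (_ + _ *: _).
rewrite (eq_bigr _ (fun j _ => scalerBr (W i j) _ _)) sumrB -scaler_suml.
by rewrite W_closed_neighbourhood_sum scale1r big_closed_neighbourhood // addrA [LHS]addrAC.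
Qed.

End Consensus.

Theorem lemma5p1
  (R : realType) (K d m n : nat)
  (adj : rel 'I_K)                 (* communication graph G(V,E) *)
  (W : 'M[R]_K)                    (* mixing matrix *)
  (H : 'M[R]_(m, d))               (* +-1 code matrix *)
  (N : nat) (N0 : R)               (* block length, noise power *)
  (P eta zeta : nat -> R)          (* powers, step sizes *)
  (sc : schedule K n.*2) :
  (* connected undirected simple graph *)
  irreflexive adj -> symmetric adj -> (forall i j, connect adj i j) ->
  (* symmetric doubly stochastic mixing matrix supported on the graph *)
  W^T = W -> (forall i j, 0 <= W i j) ->
  (forall i, \sum_(j < K) W i j = 1) -> (forall j, \sum_(i < K) W i j = 1) ->
  (forall i j, i != j -> ~~ adj i j -> W i j = 0) ->
  opnorm_lt1 (W - (K%:R)^-1 *: const_mx 1) ->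
  (* random linear coding *)
  (m <= d)%N -> (forall k l, H k l = 1 \/ H k l = -1) ->
  (d%:R)^-1 *: (H *m H^T) = 1%:M ->
  (* block of N = M m channel uses, M = 2n slots; noise power *)
  N = (n.*2 * m)%N -> 0 < N0 ->
  (* arbitrary step sizes and powers *)
  (forall t, 0 < eta t) -> (forall t, 0 <= zeta t) -> (forall t, 0 < P t) ->
  (* schedule *)
  schedule_ok adj sc ->
  (* gamma well defined: w_ji <> 0 for scheduled AirComp transmitters *)
  (forall j s i, s \in SAR sc j -> i \in Nsch sc j s -> W j i != 0) ->
  exists ntil : nat -> 'I_K -> ('I_K -> 'I_K -> R[i]) -> ('I_K -> 'cV[R]_d) ->
                ('I_K -> 'I_(n.*2) -> 'cV[R[i]]_m) -> 'cV[R]_m,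
    (* (1) the consensus update, for every realization *)
    (forall (Rsign : nat -> 'I_d -> R)
            (grad : nat -> 'I_K -> 'cV[R]_d -> 'cV[R]_d)
            (h : nat -> 'I_K -> 'I_K -> R[i])
            (nz : nat -> 'I_K -> 'I_(n.*2) -> 'cV[R[i]]_m)
            (theta0 : 'I_K -> 'cV[R]_d),
       (forall t k, Rsign t k = 1 \/ Rsign t k = -1) ->
       (forall t i j, adj i j -> h t i j != 0) ->
       (forall t i j, h t i j = h t j i) ->
       let A := codemx H Rsign in
       let u := uvec W A N P eta zeta grad h nz sc theta0 in
       (* gamma, alpha well defined along the trajectory *)
       (forall t j s i, s \in SAR sc j -> i \in Nsch sc j s -> u t i != 0) ->
       (forall t j s, s \in SBR sc j -> u t (bcast sc j s) != 0) ->
       forall (t : nat) (i : 'I_K),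
         theta W A N P eta zeta grad h nz sc theta0 t.+1 i =
           thalf W A N P eta zeta grad h nz sc theta0 t i
           + zeta t *: \sum_(j | adj i j || (j == i))
                W i j *: (thetahat W A N P eta zeta grad h nz sc theta0 t.+1 j
                          - thetahat W A N P eta zeta grad h nz sc theta0 t.+1 i)
           + zeta t *: \sum_(tau < t.+1)
                (mdr R m d *: ((A tau)^T *m ntil tau i (h tau) (u tau) (nz tau))))
    /\
    (* (2) conditionally on fading values hv and vectors uv, the effective
       noise is N(0, Ntil I_m) *)
    (forall (dT : measure_display) (T : measurableType dT)
            (Pr : probability T R)
            (nzr : T -> nat -> 'I_K -> 'I_(n.*2) -> 'cV[R[i]]_m),
       noise_iid Pr nzr N0 ->
       forall (t : nat) (i : 'I_K)
              (hv : 'I_K -> 'I_K -> R[i]) (uv : 'I_K -> 'cV[R]_d),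
         (forall j k, adj j k -> hv j k != 0) ->
         (forall j k, hv j k = hv k j) ->
         (forall s j, s \in SAR sc i -> j \in Nsch sc i s -> uv j != 0) ->
         (forall s, s \in SBR sc i -> uv (bcast sc i s) != 0) ->
         gauss_vec Pr (fun w => ntil t i hv uv (nzr w t))
                   (Ntil W N N0 P sc t i hv uv)).
Proof.
move=> adj_irr _ _ _ _ W_row _ W_off _ _ _ _ N_eq _ _ _ P_gt0 sc_ok W_AR.
exists (eff_noise W N P sc); split.
  move=> Rsign grad h nz theta0 _ h_neq0 h_sym A u u_AR u_BR t i.
  exact: (theta_update sc_ok N_eq P_gt0 W_AR h_neq0 h_sym u_AR u_BR adj_irr W_row W_off).
move=> dT T Pr nzr noise t i hv uv hv_neq0 hv_sym uv_AR _.
have hv_ji_neq0 j : adj i j -> hv j i != 0 by move=> ij; rewrite hv_sym hv_neq0.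
exact: (eff_noise_gauss sc_ok N_eq (P_gt0 t) (W_AR i) hv_ji_neq0 uv_AR (hv_sym^~ i) noise).
Qed.
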